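(* Let $\mu$ be the uniform probability measure on $\{-1,1\}^n$. Let $J$ be an $n\times n$ Hermitian matrix with $J_{i,i}=0$ for all $i$, and $h\in\mathbb{R}^n$. Then $$\log\int e^{\langle x,Jx\rangle+\langle h,x\rangle}\,d\mu(x)\le\sup_{y\in[-1,1]^n}\{\langle y,Jy\rangle+\langle h,y\rangle-I(y)\}+\kappa\,\|J\|_2\sqrt n,$$ where $\kappa$ is a universal positive constant and $\|J\|_2=\big(\sum_{i,j}|J_{i,j}|^2\big)^{1/2}$.
   Context: $I(x)=\sum_{i=1}^n\big(\frac{1+x_i}{2}\log(1+x_i)+\frac{1-x_i}{2}\log(1-x_i)\big)$ for $x\in[-1,1]^n$ and $+\infty$ otherwise. *)

From mathcomp Require Import all_boot all_order all_algebra.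
From mathcomp Require Import all_classical all_reals all_analysis.
From mathcomp Require Import complex.
Set Implicit Arguments. Unset Strict Implicit. Unset Printing Implicit Defensive.
Import Order.TTheory GRing.Theory Num.Theory.
Local Open Scope ring_scope.
Local Open Scope classical_set_scope.

Definition hermitian_mx (R : rcfType) (n : nat) (J : 'M[R[i]]_n) : Prop :=
  forall i j : 'I_n, J j i = conjc (J i j).

Definition qform (R : rcfType) (n : nat) (J : 'M[R[i]]_n) (x : 'I_n -> R) : R[i] :=
  \sum_(i < n) \sum_(j < n) ((x i)%:C)%C * J i j * ((x j)%:C)%C.

Definition dot_real (R : rcfType) (n : nat) (h x : 'I_n -> R) : R :=
  \sum_(i < n) h i * x i.

Definition hs_norm (R : rcfType) (n : nat) (J : 'M[R[i]]_n) : R :=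
  Num.sqrt (\sum_(i < n) \sum_(j < n) (complex.Re (J i j) ^+ 2 + complex.Im (J i j) ^+ 2)).

(* rate function I(x) on [-1,1]^n (convention 0 log 0 = 0, since ln 0 = 0) *)
Definition Irate (R : realType) (n : nat) (x : 'I_n -> R) : R :=
  \sum_(i < n) ((1 + x i) / 2 * ln (1 + x i) + (1 - x i) / 2 * ln (1 - x i)).

Definition spin_of (R : ringType) (n : nat) (s : {ffun 'I_n -> bool}) : 'I_n -> R :=
  fun i => if s i then 1 else -1.

Definition unif_cube_int (R : realType) (n : nat) (f : ('I_n -> R) -> R) : R :=
  (2 ^+ n)^-1 * \sum_(s : {ffun 'I_n -> bool}) f (spin_of R s).

Definition pm1_cube (R : realType) (n : nat) : set ('I_n -> R) :=
  [set y | forall i, -1 <= y i <= 1].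

From mathcomp Require Import all_boot all_order all_algebra.
From mathcomp Require Import all_classical all_reals all_analysis.
From mathcomp Require Import complex.
From mathcomp Require Import ring lra.
Import Order.TTheory GRing.Theory Num.Theory.
Local Open Scope ring_scope.
Local Open Scope classical_set_scope.

Set Implicit Arguments. Unset Strict Implicit. Unset Printing Implicit Defensive.

(* Conditioning on the first spin gives Z = (Z+ + Z-) / 2, where Z+ and Z- are the
   partition functions of the remaining spins in the fields h + J_0. and h - J_0., and
   ln ((a + b) / 2) = p ln a + (1 - p) ln b - I1 (2 p - 1) with p = a / (a + b).
   By induction on n this yields a finitely supported probability measure nu on
   [-1, 1]^n and a matrix C with
     ln Z <= E_nu [<y, J y> + <h, y> - I(y)] + <J, C>,   |C|^2 <= 2 sum_j Var_nu (y_j):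
   nu mixes, with weights p and 1 - p, the two measures of the conditioned systems with
   the first coordinate set to the mean spin 2 p - 1.  Replacing the first spin by its
   mean costs a border term in C, paid for by the between-group part of the variance
   of the mixture.  As E_nu <= sup and Var_nu <= 1, Cauchy-Schwarz gives kappa = sqrt 2. *)

Definition vcons (T : Type) n (m : T) (y : 'I_n -> T) : 'I_n.+1 -> T :=
  fun i => if unlift ord0 i is Some j then y j else m.

Lemma vcons0 (T : Type) n (m : T) (y : 'I_n -> T) : vcons m y ord0 = m.
Proof. by rewrite /vcons unlift_none. Qed.

Lemma vconsS (T : Type) n (m : T) (y : 'I_n -> T) j : vcons m y (lift ord0 j) = y j.
Proof. by rewrite /vcons liftK. Qed.

Lemma sum_ffun_cons (V : nmodType) (T : finType) n (F : {ffun 'I_n.+1 -> T} -> V) :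
  \sum_(s : {ffun 'I_n.+1 -> T}) F s =
  \sum_(b : T) \sum_(s : {ffun 'I_n -> T}) F [ffun i => vcons b s i].
Proof.
rewrite pair_big /=.
pose tail (s : {ffun 'I_n.+1 -> T}) : {ffun 'I_n -> T} := [ffun j => s (lift ord0 j)].
rewrite (reindex (fun p : T * {ffun 'I_n -> T} => [ffun i => vcons p.1 p.2 i])) //=.
exists (fun s : {ffun 'I_n.+1 -> T} => (s ord0, tail s)) => [[b s]|s] _ /=.
  by rewrite ffunE vcons0; congr pair; apply/ffunP => j; rewrite !ffunE vconsS.
apply/ffunP => i; rewrite ffunE /vcons.
by case: unliftP => [j ->|->]; rewrite ?ffunE.
Qed.

Lemma sum2_ord_recl (V : nmodType) n (F : 'I_n.+1 -> 'I_n.+1 -> V) :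
  \sum_(i < n.+1) \sum_(j < n.+1) F i j =
  F ord0 ord0 + \sum_(j < n) F ord0 (lift ord0 j) + \sum_(i < n) F (lift ord0 i) ord0
  + \sum_(i < n) \sum_(j < n) F (lift ord0 i) (lift ord0 j).
Proof.
rewrite big_ord_recl (big_ord_recl n).
under [X in _ + X = _]eq_bigr do rewrite big_ord_recl.
by rewrite big_split /= !addrA.
Qed.

Lemma cauchy_schwarz_sumr (R : rcfType) (I : finType) (a b : I -> R) :
  \sum_k a k * b k <= Num.sqrt (\sum_k a k ^+ 2) * Num.sqrt (\sum_k b k ^+ 2).
Proof.
pose G k l := a k ^+ 2 * b l ^+ 2 - a k * b k * (a l * b l).
have sumG : \sum_k \sum_l G k l = (\sum_k a k ^+ 2) * (\sum_k b k ^+ 2) - (\sum_k a k * b k) ^+ 2.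
  rewrite expr2 !big_distrlr -sumrB; apply: eq_bigr => k _; exact: sumrB.
have lagrange : \sum_k \sum_l (a k * b l - a l * b k) ^+ 2 = 2 * \sum_k \sum_l G k l.
  transitivity (\sum_k \sum_l G k l + \sum_k \sum_l G l k).
    rewrite -big_split; apply: eq_bigr => k _; rewrite -big_split.
    by apply: eq_bigr => l _; rewrite /G /=; ring.
  by rewrite [X in _ + X]exchange_big mulr_natl mulr2n.
have sq_le : (\sum_k a k * b k) ^+ 2 <= (\sum_k a k ^+ 2) * (\sum_k b k ^+ 2).
  rewrite -subr_ge0 -sumG -(@pmulr_rge0 _ 2) // -lagrange.
  by apply: sumr_ge0 => k _; apply: sumr_ge0 => l _; exact: sqr_ge0.
have sumsq_ge0 (f : I -> R) : 0 <= \sum_k f k ^+ 2.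
  by apply: sumr_ge0 => k _; exact: sqr_ge0.
by rewrite -sqrtrM // (le_trans (ler_norm _)) // -sqrtr_sqr ler_sqrt // mulr_ge0.
Qed.

Section MeanField.
Variable R : realType.
Implicit Types (n : nat) (c m p s : R).

Definition mxdot n (A C : 'I_n -> 'I_n -> R) : R :=
  \sum_(i < n) \sum_(j < n) A i j * C i j.

Definition energy n (A : 'I_n -> 'I_n -> R) (h y : 'I_n -> R) : R :=
  mxdot A (fun i j => y i * y j) + dot_real h y.

Definition partition n (A : 'I_n -> 'I_n -> R) (h : 'I_n -> R) c : R :=
  unif_cube_int (fun x => expR (energy A h x + c)).

Definition mf_free_energy n (A : 'I_n -> 'I_n -> R) (h : 'I_n -> R) c (y : 'I_n -> R) : R :=
  energy A h y + c - Irate y.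

Definition Irate1 (t : R) : R :=
  (1 + t) / 2 * ln (1 + t) + (1 - t) / 2 * ln (1 - t).

Definition mxtail n (A : 'I_n.+1 -> 'I_n.+1 -> R) : 'I_n -> 'I_n -> R :=
  fun i j => A (lift ord0 i) (lift ord0 j).

Definition coupling0 n (A : 'I_n.+1 -> 'I_n.+1 -> R) : 'I_n -> R :=
  fun j => A ord0 (lift ord0 j) + A (lift ord0 j) ord0.

Definition cond_field n (A : 'I_n.+1 -> 'I_n.+1 -> R) (h : 'I_n.+1 -> R) s : 'I_n -> R :=
  fun j => h (lift ord0 j) + s * coupling0 A j.

Lemma dot_real_vcons n (h : 'I_n.+1 -> R) m y :
  dot_real h (vcons m y) = h ord0 * m + dot_real (fun j => h (lift ord0 j)) y.
Proof.
rewrite /dot_real big_ord_recl vcons0; congr (_ + _).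
by apply: eq_bigr => j _; rewrite vconsS.
Qed.

Lemma dot_realDZl n (u v y : 'I_n -> R) k :
  dot_real (fun j => u j + k * v j) y = dot_real u y + k * dot_real v y.
Proof. by rewrite /dot_real mulr_sumr -big_split; apply: eq_bigr => j _ /=; ring. Qed.

Lemma dot_realZBr n (a u v : 'I_n -> R) k :
  dot_real a (fun j => k * (u j - v j)) = k * (dot_real a u - dot_real a v).
Proof. by rewrite /dot_real -sumrB mulr_sumr; apply: eq_bigr => j _; ring. Qed.

Lemma energy_vcons n (A : 'I_n.+1 -> 'I_n.+1 -> R) h s m y : A ord0 ord0 = 0 ->
  energy A h (vcons m y) = energy (mxtail A) (cond_field A h s) y + s * h ord0
                           + (m - s) * (dot_real (coupling0 A) y + h ord0).
Proof.
move=> A00; rewrite /energy /mxdot sum2_ord_recl A00 mul0r add0r !vcons0.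
under eq_bigr do rewrite vconsS.
under [X in _ + X + _ + _ = _]eq_bigr do rewrite vconsS.
under [X in _ + X + _ = _]eq_bigr do under eq_bigr do rewrite !vconsS.
rewrite dot_real_vcons /cond_field dot_realDZl.
have -> : \sum_(j < n) A ord0 (lift ord0 j) * (m * y j)
          + \sum_(i < n) A (lift ord0 i) ord0 * (y i * m) = m * dot_real (coupling0 A) y.
  by rewrite /dot_real mulr_sumr -big_split; apply: eq_bigr => j _ /=; rewrite /coupling0; ring.
rewrite /mxtail; ring.
Qed.

Lemma spin_of_vcons n (b : bool) (s : {ffun 'I_n -> bool}) :
  spin_of R [ffun i => vcons b s i] = vcons (if b then 1 else -1) (spin_of R s).
Proof. by apply/funext => i; rewrite /spin_of ffunE /vcons; case: unlift. Qed.

Lemma unif_cube_int_cons n (f : ('I_n.+1 -> R) -> R) :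
  unif_cube_int f =
  (unif_cube_int (fun y => f (vcons 1 y)) + unif_cube_int (fun y => f (vcons (-1) y))) / 2.
Proof.
rewrite /unif_cube_int sum_ffun_cons big_bool /=.
under eq_bigr do rewrite spin_of_vcons.
under [X in _ * (_ + X) = _]eq_bigr do rewrite spin_of_vcons.
by rewrite exprS invfM; ring.
Qed.

Lemma partition_cons n (A : 'I_n.+1 -> 'I_n.+1 -> R) h c : A ord0 ord0 = 0 ->
  partition A h c = (partition (mxtail A) (cond_field A h 1) (c + h ord0)
                     + partition (mxtail A) (cond_field A h (-1)) (c - h ord0)) / 2.
Proof.
move=> A00; rewrite /partition unif_cube_int_cons.
congr ((_ + _) / 2); congr unif_cube_int; apply/funext => y; congr expR.
  by rewrite (energy_vcons _ 1) // subrr mul0r addr0; ring.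
by rewrite (energy_vcons _ (-1)) // subrr mul0r addr0; ring.
Qed.

Lemma partition_gt0 n (A : 'I_n -> 'I_n -> R) h c : 0 < partition A h c.
Proof.
rewrite /partition /unif_cube_int mulr_gt0 ?invr_gt0 ?exprn_gt0 //.
rewrite (bigD1 [ffun=> true]) //= ltr_pwDl ?expR_gt0 //.
by apply: sumr_ge0 => s _; exact: expR_ge0.
Qed.

Lemma Irate_vcons n m (y : 'I_n -> R) : Irate (vcons m y) = Irate1 m + Irate y.
Proof.
rewrite /Irate big_ord_recl vcons0; congr (_ + _).
by apply: eq_bigr => j _; rewrite vconsS.
Qed.

Lemma subr1_le_mul_ln (u : R) : 0 <= u -> u - 1 <= u * ln u.
Proof.
rewrite le_eqVlt => /orP[/eqP <-|u0]; first by rewrite ln0 // mul0r sub0r lerN10.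
have uV0 : 0 < u^-1 by rewrite invr_gt0.
have : ln (u^-1) <= u^-1 - 1.
  by have := @le_ln1Dx _ (u^-1 - 1); rewrite addrCA subrr addr0; apply; lra.
rewrite lnV ?posrE // => lnVu.
have : u * - ln u <= u * (u^-1 - 1) by rewrite ler_pM2l.
by rewrite mulrBr mulfV ?gt_eqF // mulr1 mulrN; lra.
Qed.

Lemma Irate1_ge0 (t : R) : -1 <= t <= 1 -> 0 <= Irate1 t.
Proof.
move=> /andP[t_ge t_le].
have := subr1_le_mul_ln (_ : 0 <= 1 + t); have := subr1_le_mul_ln (_ : 0 <= 1 - t).
rewrite /Irate1; lra.
Qed.

Lemma Irate_ge0 n (y : 'I_n -> R) : pm1_cube y -> 0 <= Irate y.
Proof. by move=> y_cube; apply: sumr_ge0 => i _; exact: Irate1_ge0. Qed.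

(* Irate1 (2 p - 1) is the relative entropy of (p, 1 - p) with respect to (1/2, 1/2). *)
Lemma ln_mean2 (a b : R) : 0 < a -> 0 < b ->
  ln ((a + b) / 2) = a / (a + b) * ln a + (1 - a / (a + b)) * ln b
                     - Irate1 (2 * (a / (a + b)) - 1).
Proof.
move=> a0 b0; have ab0 : a + b != 0 by rewrite gt_eqF // addr_gt0.
have E1 : 1 + (2 * (a / (a + b)) - 1) = a / ((a + b) / 2) by field.
have E2 : 1 - (2 * (a / (a + b)) - 1) = b / ((a + b) / 2) by field.
rewrite /Irate1 E1 E2 !ln_div ?posrE ?divr_gt0 ?addr_gt0 //.
have -> : a / ((a + b) / 2) / 2 = a / (a + b) by field.
have -> : b / ((a + b) / 2) / 2 = 1 - a / (a + b) by field.
ring.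
Qed.

(* Finitely supported probability measures on the cube, as lists of (weight, point). *)
Definition expect n (l : seq (R * ('I_n -> R))) (F : ('I_n -> R) -> R) : R :=
  \sum_(q <- l) q.1 * F q.2.

Definition cube_dist n (l : seq (R * ('I_n -> R))) : Prop :=
  all (fun q => (0 <= q.1) && [forall i, -1 <= q.2 i <= 1]) l /\ expect l (fun=> 1) = 1.

Definition mean n (l : seq (R * ('I_n -> R))) (j : 'I_n) : R := expect l (fun y => y j).

Definition var n (l : seq (R * ('I_n -> R))) (j : 'I_n) : R :=
  expect l (fun y => y j ^+ 2) - mean l j ^+ 2.

Definition mixture n p m (l1 l2 : seq (R * ('I_n -> R))) : seq (R * ('I_n.+1 -> R)) :=
  [seq (p * q.1, vcons m q.2) | q <- l1] ++ [seq ((1 - p) * q.1, vcons m q.2) | q <- l2].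

Section Expectation.
Variables (n : nat) (l : seq (R * ('I_n -> R))).
Implicit Types F G : ('I_n -> R) -> R.

Lemma eq_expect F G : F =1 G -> expect l F = expect l G.
Proof. by move=> FG; apply: eq_bigr => q _; rewrite FG. Qed.

Lemma expectD F G : expect l (fun y => F y + G y) = expect l F + expect l G.
Proof. by rewrite /expect -big_split; apply: eq_bigr => q _; rewrite mulrDr. Qed.

Lemma expectZ k F : expect l (fun y => k * F y) = k * expect l F.
Proof. by rewrite /expect mulr_sumr; apply: eq_bigr => q _; rewrite mulrCA. Qed.

Lemma expect_cst k : expect l (fun=> 1) = 1 -> expect l (fun=> k) = k.
Proof.
by move=> l1; rewrite -[X in _ = X]mulr1 -l1 -expectZ; apply: eq_expect => y; rewrite mulr1.
Qed.

Lemma expect_dot a : expect l (dot_real a) = dot_real a (mean l).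
Proof.
rewrite /dot_real /mean /expect; under eq_bigr do rewrite mulr_sumr.
by rewrite exchange_big; apply: eq_bigr => j _; rewrite mulr_sumr; apply: eq_bigr => q _; ring.
Qed.

Lemma expect_le F B : cube_dist l -> (forall y, pm1_cube y -> F y <= B) -> expect l F <= B.
Proof.
move=> [l_cube l1] FB; rewrite -(expect_cst B l1).
elim: l l_cube {l1} => [|q l' IHl] /=; first by rewrite /expect !big_nil.
move=> /andP[/andP[q0 /forallP q_cube] l'_cube]; rewrite /expect !big_cons.
by rewrite lerD ?IHl // ler_wpM2l // FB.
Qed.

Lemma var_le1 j : cube_dist l -> var l j <= 1.
Proof.
move=> l_dist; have := sqr_ge0 (mean l j).
have : expect l (fun y => y j ^+ 2) <= 1.
  apply: expect_le => // y /(_ j) /andP[y_ge y_le].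
  by rewrite -subr_ge0 (_ : 1 - _ = (1 - y j) * (1 + y j)) ?mulr_ge0 //; lra.
rewrite /var; lra.
Qed.

End Expectation.

Section Mixture.
Variables (n : nat) (p m : R) (l1 l2 : seq (R * ('I_n -> R))).

Lemma expect_mixture F :
  expect (mixture p m l1 l2) F =
  p * expect l1 (fun y => F (vcons m y)) + (1 - p) * expect l2 (fun y => F (vcons m y)).
Proof.
rewrite /expect /mixture big_cat !big_map !mulr_sumr /=.
by congr (_ + _); apply: eq_bigr => q _; rewrite mulrA.
Qed.

Lemma cube_dist_mixture : 0 <= p <= 1 -> -1 <= m <= 1 ->
  cube_dist l1 -> cube_dist l2 -> cube_dist (mixture p m l1 l2).
Proof.
move=> /andP[p0 p1] m_cube [l1_cube l1_mass] [l2_cube l2_mass]; split.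
  rewrite all_cat !all_map; apply/andP; split; [move: l1_cube | move: l2_cube];
    apply: sub_all => q /andP[q0 /forallP q_cube] /=;
    rewrite mulr_ge0 ?subr_ge0 //=; apply/forallP => i; rewrite /vcons;
    by case: unlift.
by rewrite expect_mixture l1_mass l2_mass; ring.
Qed.

Hypotheses (l1_mass : expect l1 (fun=> 1) = 1) (l2_mass : expect l2 (fun=> 1) = 1).

Lemma var_mixture0 : var (mixture p m l1 l2) ord0 = 0.
Proof.
rewrite /var /mean !expect_mixture.
under [X in _ * X + _ - _ = _]eq_expect do rewrite vcons0.
under [X in _ + _ * X - _ = _]eq_expect do rewrite vcons0.
under [X in _ - (_ * X + _) ^+ 2 = _]eq_expect do rewrite vcons0.
under [X in _ - (_ + _ * X) ^+ 2 = _]eq_expect do rewrite vcons0.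
by rewrite !(expect_cst _ l1_mass) !(expect_cst _ l2_mass); ring.
Qed.

Lemma var_mixtureS j :
  var (mixture p m l1 l2) (lift ord0 j) =
  p * var l1 j + (1 - p) * var l2 j + p * (1 - p) * (mean l1 j - mean l2 j) ^+ 2.
Proof.
rewrite /var /mean !expect_mixture.
under [X in _ * X + _ - _ = _]eq_expect do rewrite vconsS.
under [X in _ + _ * X - _ = _]eq_expect do rewrite vconsS.
under [X in _ - (_ * X + _) ^+ 2 = _]eq_expect do rewrite vconsS.
under [X in _ - (_ + _ * X) ^+ 2 = _]eq_expect do rewrite vconsS.
ring.
Qed.

End Mixture.

Definition bordered n (v : 'I_n -> R) (D : 'I_n -> 'I_n -> R) : 'I_n.+1 -> 'I_n.+1 -> R :=
  vcons (vcons 0 v) (fun i => vcons (v i) (D i)).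

Lemma mxdot_bordered n (A : 'I_n.+1 -> 'I_n.+1 -> R) v D : A ord0 ord0 = 0 ->
  mxdot A (bordered v D) = dot_real (coupling0 A) v + mxdot (mxtail A) D.
Proof.
move=> A00; rewrite /mxdot sum2_ord_recl A00 mul0r add0r /bordered !vcons0.
under eq_bigr do rewrite vconsS.
under [X in _ + X + _ = _]eq_bigr do rewrite vconsS vcons0.
under [X in _ + X = _]eq_bigr do under eq_bigr do rewrite !vconsS.
congr (_ + _); rewrite /dot_real -big_split; apply: eq_bigr => j _ /=; rewrite /coupling0; ring.
Qed.

Lemma mxdot_bordered_self n (v : 'I_n -> R) D :
  mxdot (bordered v D) (bordered v D) = 2 * \sum_(j < n) v j ^+ 2 + mxdot D D.
Proof.
rewrite /mxdot sum2_ord_recl /bordered !vcons0 mul0r add0r.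
under eq_bigr do rewrite vconsS.
under [X in _ + X + _ = _]eq_bigr do rewrite vconsS vcons0.
under [X in _ + X = _]eq_bigr do under eq_bigr do rewrite !vconsS.
by rewrite mulr_natl mulr2n.
Qed.

Definition mxconv n p (C1 C2 : 'I_n -> 'I_n -> R) : 'I_n -> 'I_n -> R :=
  fun i j => p * C1 i j + (1 - p) * C2 i j.

Lemma mxdot_mxconv n (A C1 C2 : 'I_n -> 'I_n -> R) p :
  mxdot A (mxconv p C1 C2) = p * mxdot A C1 + (1 - p) * mxdot A C2.
Proof.
rewrite /mxdot !mulr_sumr -big_split; apply: eq_bigr => i _.
by rewrite !mulr_sumr -big_split; apply: eq_bigr => j _ /=; rewrite /mxconv; ring.
Qed.

Lemma mxdot_mxconv_self n (C1 C2 : 'I_n -> 'I_n -> R) p : 0 <= p <= 1 ->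
  mxdot (mxconv p C1 C2) (mxconv p C1 C2) <= p * mxdot C1 C1 + (1 - p) * mxdot C2 C2.
Proof.
move=> /andP[p0 p1]; rewrite /mxdot !mulr_sumr -big_split; apply: ler_sum => i _.
rewrite !mulr_sumr -big_split; apply: ler_sum => j _ /=; rewrite /mxconv -subr_ge0.
have -> : p * (C1 i j * C1 i j) + (1 - p) * (C2 i j * C2 i j)
          - (p * C1 i j + (1 - p) * C2 i j) * (p * C1 i j + (1 - p) * C2 i j)
          = p * (1 - p) * (C1 i j - C2 i j) ^+ 2 by ring.
by rewrite mulr_ge0 ?sqr_ge0 // mulr_ge0 // subr_ge0.
Qed.

Lemma mf_free_energy_vcons n (A : 'I_n.+1 -> 'I_n.+1 -> R) h c s m y : A ord0 ord0 = 0 ->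
  mf_free_energy A h c (vcons m y) =
  mf_free_energy (mxtail A) (cond_field A h s) (c + s * h ord0) y
  + (m - s) * dot_real (coupling0 A) y + ((m - s) * h ord0 - Irate1 m).
Proof. by move=> A00; rewrite /mf_free_energy (energy_vcons _ s) // Irate_vcons; ring. Qed.

Lemma expect_affine n (l : seq (R * ('I_n -> R))) F G k K : expect l (fun=> 1) = 1 ->
  expect l (fun y => F y + k * G y + K) = expect l F + k * expect l G + K.
Proof. by move=> l1; rewrite !expectD expectZ expect_cst. Qed.

Definition mixture_error n p (l1 l2 : seq (R * ('I_n -> R))) (C1 C2 : 'I_n -> 'I_n -> R) :
    'I_n.+1 -> 'I_n.+1 -> R :=
  bordered (fun j => 2 * p * (1 - p) * (mean l1 j - mean l2 j)) (mxconv p C1 C2).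

Section MixtureStep.
Variables (n : nat) (A : 'I_n.+1 -> 'I_n.+1 -> R) (h : 'I_n.+1 -> R) (c p : R).
Variables (l1 l2 : seq (R * ('I_n -> R))).
Hypotheses (A00 : A ord0 ord0 = 0).
Hypotheses (l1_mass : expect l1 (fun=> 1) = 1) (l2_mass : expect l2 (fun=> 1) = 1).

Lemma expect_mf_free_energy_mixture (C1 C2 : 'I_n -> 'I_n -> R) :
  expect (mixture p (2 * p - 1) l1 l2) (mf_free_energy A h c)
  + mxdot A (mixture_error p l1 l2 C1 C2)
  = p * (expect l1 (mf_free_energy (mxtail A) (cond_field A h 1) (c + h ord0))
         + mxdot (mxtail A) C1)
  + (1 - p) * (expect l2 (mf_free_energy (mxtail A) (cond_field A h (-1)) (c - h ord0))
               + mxdot (mxtail A) C2)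
  - Irate1 (2 * p - 1).
Proof.
have vcons_term s l : expect l (fun=> 1) = 1 ->
    expect l (fun y => mf_free_energy A h c (vcons (2 * p - 1) y)) =
    expect l (mf_free_energy (mxtail A) (cond_field A h s) (c + s * h ord0))
    + (2 * p - 1 - s) * dot_real (coupling0 A) (mean l)
    + ((2 * p - 1 - s) * h ord0 - Irate1 (2 * p - 1)).
  move=> l_mass; rewrite -expect_dot -expect_affine //.
  by apply: eq_expect => y; rewrite (mf_free_energy_vcons _ _ s).
rewrite expect_mixture (vcons_term 1) // (vcons_term (-1)) // mul1r mulN1r.
rewrite /mixture_error mxdot_bordered // mxdot_mxconv dot_realZBr; ring.
Qed.

End MixtureStep.

Lemma mixture_error_norm n p m (l1 l2 : seq (R * ('I_n -> R))) (C1 C2 : 'I_n -> 'I_n -> R) :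
  0 <= p <= 1 -> expect l1 (fun=> 1) = 1 -> expect l2 (fun=> 1) = 1 ->
  mxdot C1 C1 <= 2 * \sum_(j < n) var l1 j -> mxdot C2 C2 <= 2 * \sum_(j < n) var l2 j ->
  mxdot (mixture_error p l1 l2 C1 C2) (mixture_error p l1 l2 C1 C2)
  <= 2 * \sum_(j < n.+1) var (mixture p m l1 l2) j.
Proof.
move=> p01 l1_mass l2_mass normC1 normC2.
have /andP[p0 p1] := p01; have p1' : 0 <= 1 - p by rewrite subr_ge0.
rewrite mxdot_bordered_self big_ord_recl var_mixture0 // add0r.
under [X in _ <= _ * X]eq_bigr do rewrite var_mixtureS.
rewrite !big_split /= -!mulr_sumr.
(* because 4 p (1 - p) <= 1 *)
have border_le : \sum_(j < n) (2 * p * (1 - p) * (mean l1 j - mean l2 j)) ^+ 2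
                <= p * (1 - p) * \sum_(j < n) (mean l1 j - mean l2 j) ^+ 2.
  rewrite mulr_sumr; apply: ler_sum => j _; rewrite -subr_ge0.
  have -> : p * (1 - p) * (mean l1 j - mean l2 j) ^+ 2
            - (2 * p * (1 - p) * (mean l1 j - mean l2 j)) ^+ 2
            = p * (1 - p) * ((2 * p - 1) * (mean l1 j - mean l2 j)) ^+ 2 by ring.
  by rewrite mulr_ge0 ?sqr_ge0 // mulr_ge0.
have := mxdot_mxconv_self C1 C2 p01.
have := ler_wpM2l p0 normC1; have := ler_wpM2l p1' normC2; lra.
Qed.

Definition mf_certificate n (A : 'I_n -> 'I_n -> R) h c (l : seq (R * ('I_n -> R)))
    (C : 'I_n -> 'I_n -> R) : Prop :=
  [/\ cube_dist l,
      ln (partition A h c) <= expect l (mf_free_energy A h c) + mxdot A C &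
      mxdot C C <= 2 * \sum_(j < n) var l j].

Lemma mf_certificate_nil (A : 'I_0 -> 'I_0 -> R) h c :
  mf_certificate A h c [:: (1, fun=> 0)] (fun _ _ => 0).
Proof.
have mass1 : expect ([:: (1, fun=> 0)] : seq (R * ('I_0 -> R))) (fun=> 1) = 1.
  by rewrite /expect big_seq1 mulr1.
split; first by split=> //=; rewrite ler01 andbT; apply/forallP => -[].
  rewrite /partition /unif_cube_int expr0 invr1 mul1r.
  rewrite (big_pred1 [ffun=> false]) => [|s]; last by apply/esym/eqP/ffunP => -[].
  rewrite /expect big_seq1 mul1r /mf_free_energy /energy /mxdot /dot_real /Irate !big_ord0.
  by rewrite !add0r expRK subr0 addr0.
by rewrite /mxdot !big_ord0 mulr0.
Qed.

Lemma mf_certificate_cons n (A : 'I_n.+1 -> 'I_n.+1 -> R) h c l1 C1 l2 C2 :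
  A ord0 ord0 = 0 ->
  mf_certificate (mxtail A) (cond_field A h 1) (c + h ord0) l1 C1 ->
  mf_certificate (mxtail A) (cond_field A h (-1)) (c - h ord0) l2 C2 ->
  exists l C, mf_certificate A h c l C.
Proof.
move=> A00 [l1_dist lnZ1 normC1] [l2_dist lnZ2 normC2].
have [[_ l1_mass] [_ l2_mass]] := (l1_dist, l2_dist).
set a := partition _ _ _ in lnZ1; set b := partition _ _ _ in lnZ2.
have [a0 b0] : 0 < a /\ 0 < b by split; exact: partition_gt0.
pose p := a / (a + b).
have p01 : 0 <= p <= 1 by rewrite divr_ge0 ?ler_pdivrMr ?mul1r ?lerDl ?ltW ?addr_gt0.
have /andP[p0 p1] := p01.
exists (mixture p (2 * p - 1) l1 l2), (mixture_error p l1 l2 C1 C2); split.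
- by apply: cube_dist_mixture => //; apply/andP; split; lra.
- rewrite expect_mf_free_energy_mixture // partition_cons // -/a -/b ln_mean2 // -/p.
  have := ler_wpM2l p0 lnZ1; have := ler_wpM2l (_ : 0 <= 1 - p) lnZ2; rewrite subr_ge0; lra.
- exact: mixture_error_norm.
Qed.

Lemma mf_certificate_exists n (A : 'I_n -> 'I_n -> R) h c :
  (forall i, A i i = 0) -> exists l C, mf_certificate A h c l C.
Proof.
elim: n A h c => [|n IH] A h c A0; first by do 2 eexists; exact: mf_certificate_nil.
have A'0 i : mxtail A i i = 0 by exact: A0.
have [l1 [C1 cert1]] := IH _ (cond_field A h 1) (c + h ord0) A'0.
have [l2 [C2 cert2]] := IH _ (cond_field A h (-1)) (c - h ord0) A'0.
exact: mf_certificate_cons (A0 ord0) cert1 cert2.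
Qed.

Lemma mf_free_energy_ub n (A : 'I_n -> 'I_n -> R) h c y : pm1_cube y ->
  mf_free_energy A h c y <= \sum_i \sum_j `|A i j| + \sum_i `|h i| + c.
Proof.
move=> y_cube; have y1 i : `|y i| <= 1 by rewrite ler_norml; exact: y_cube.
have qform_le : mxdot A (fun i j => y i * y j) <= \sum_i \sum_j `|A i j|.
  apply: ler_sum => i _; apply: ler_sum => j _; apply: le_trans (ler_norm _) _.
  by rewrite normrM ler_piMr // normrM mulr_ile1.
have dot_le : dot_real h y <= \sum_i `|h i|.
  apply: ler_sum => i _; apply: le_trans (ler_norm _) _.
  by rewrite normrM ler_piMr.
have := Irate_ge0 y_cube; rewrite /mf_free_energy /energy; lra.
Qed.

Lemma expect_mf_free_energy_le_sup n (A : 'I_n -> 'I_n -> R) h c l : cube_dist l ->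
  expect l (mf_free_energy A h c) <= sup [set mf_free_energy A h c y | y in @pm1_cube R n].
Proof.
move=> l_dist; apply: expect_le => // y y_cube.
have ubS : has_ubound [set mf_free_energy A h c y | y in @pm1_cube R n].
  exists (\sum_i \sum_j `|A i j| + \sum_i `|h i| + c) => _ [z z_cube <-].
  exact: mf_free_energy_ub.
by move: (ub_le_sup ubS) => /ubP; apply; exists y.
Qed.

Lemma mxdot_le_sqrt n (A C : 'I_n -> 'I_n -> R) :
  mxdot A C <= Num.sqrt (mxdot A A) * Num.sqrt (mxdot C C).
Proof. by rewrite /mxdot !pair_big; exact: cauchy_schwarz_sumr. Qed.

Lemma sum_var_le n (l : seq (R * ('I_n -> R))) : cube_dist l -> \sum_(j < n) var l j <= n%:R.
Proof.
move=> l_dist; apply: le_trans (ler_sum _ (fun j _ => var_le1 j l_dist)) _.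
by rewrite sumr_const card_ord.
Qed.

Lemma Re_qform n (J : 'M[R[i]]_n) (x : 'I_n -> R) :
  complex.Re (qform J x) = mxdot (fun i j => complex.Re (J i j)) (fun i j => x i * x j).
Proof.
rewrite /qform /mxdot (raddf_sum (@complex.Re R : Rcomplex R -> R)); apply: eq_bigr => i _.
rewrite (raddf_sum (@complex.Re R : Rcomplex R -> R)); apply: eq_bigr => j _.
by case: (J i j) => u v /=; ring.
Qed.

Lemma sqrt_mxdot_Re_le_hs_norm n (J : 'M[R[i]]_n) :
  Num.sqrt (mxdot (fun i j => complex.Re (J i j)) (fun i j => complex.Re (J i j))) <= hs_norm J.
Proof.
rewrite /hs_norm ler_sqrt; last by do 2!apply: sumr_ge0 => ? _; rewrite addr_ge0 ?sqr_ge0.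
by do 2!apply: ler_sum => ? _; rewrite -expr2 lerDl sqr_ge0.
Qed.

End MeanField.

Theorem corollary2p9 (R : realType) :
  exists kappa : R, 0 < kappa /\
  forall (n : nat) (J : 'M[R[i]]_n) (h : 'I_n -> R),
    hermitian_mx J ->
    (forall k : 'I_n, J k k = 0) ->
    ln (unif_cube_int (fun x => expR (complex.Re (qform J x) + dot_real h x)))
    <= sup [set complex.Re (qform J y) + dot_real h y - Irate y | y in @pm1_cube R n]
       + kappa * hs_norm J * Num.sqrt (n%:R).
Proof.
exists (Num.sqrt 2); split=> [|n J h _ J0]; first by rewrite sqrtr_gt0.
pose A i j := complex.Re (J i j).
have A0 k : A k k = 0 by rewrite /A J0.
have [l [C [l_dist lnZ normC]]] := mf_certificate_exists h 0 A0.
have energyE y : complex.Re (qform J y) + dot_real h y = energy A h y + 0.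
  by rewrite addr0 Re_qform.
rewrite (_ : unif_cube_int _ = partition A h 0); last first.
  by congr unif_cube_int; apply/funext => x; rewrite energyE.
rewrite (_ : [set _ | y in _] = [set mf_free_energy A h 0 y | y in @pm1_cube R n]); last first.
  by congr image; apply/funext => y; rewrite /mf_free_energy energyE.
apply: (le_trans lnZ); apply: lerD; first exact: expect_mf_free_energy_le_sup.
apply: (le_trans (mxdot_le_sqrt A C)).
rewrite [Num.sqrt 2 * _]mulrC -mulrA -(@sqrtrM _ 2) //.
apply: ler_pM; rewrite ?sqrtr_ge0 ?sqrt_mxdot_Re_le_hs_norm //.
rewrite ler_sqrt ?mulr_ge0 //; apply: (le_trans normC).
by rewrite ler_pM2l // sum_var_le.
Qed.
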